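(* Let $n\in\mathbb{N}$, $k\geq2$, $u\equiv a_{i_1}a_{i_2}\cdots a_{i_k}$ and $x$ with $x,a_{i_j}\in\{a_1,\dots,a_n\}$, and let $S=sgp^+\langle a_1,\dots,a_n\mid u=x\rangle$, where $\{u=x\}$ is a Gröbner–Shirshov basis. Then $S$ is prefix-automatic.
   Context: $A^*$ is the free monoid (empty word $\varepsilon$), $A^+=A^*\setminus\{\varepsilon\}$. $sgp^+\langle A\mid R\rangle$ is $A^+$ modulo the congruence generated by $R$. Gröbner–Shirshov bases: fix a well-ordering of $A$ and the deg-lex ordering on $A^*$ (length, then lexicographic). For monic polynomials $f,g$ in the free associative algebra $F\langle A\rangle$ over a field with leading words $\bar f,\bar g$: if $w\equiv\bar f b\equiv a\bar g$ with $|\bar f|+|\bar g|>|w|$, $(f,g)_w=fb-ag$; if $w\equiv\bar f\equiv a\bar g b$, $(f,g)_w=f-agb$; trivial modulo $(R,w)$ if it equals $\sum\alpha_i a_i s_i b_i$ with $s_i\in R$, $a_i\bar{s_i}b_i<w$. $R$ is a Gröbner–Shirshov basis if all compositions are trivial; $\{u=x\}$ is one if $\{u-x\}$ is. Automaticity: regular = accepted by a finite automaton. With $\$\notin A$, $A(2,\$)=(A\cup\{\$\})^2\setminus\{(\$,\$)\}$; $(\alpha,\beta)\delta_A^R$ is the word over $A(2,\$)$ obtained by padding the shorter word on the right with $\$$'s and reading letter pairs. For $S$ generated by finite $A$, $\phi:A^+\to S$ canonical, $L\subseteq A^+$ regular with $\phi(L)=S$, write $\alpha=\beta$ if $\phi(\alpha)=\phi(\beta)$,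 and $L_a^\$=\{(\alpha,\beta)\delta^R_A:\alpha,\beta\in L,\alpha a=\beta\}$ for $a\in A\cup\{\varepsilon\}$. $(A,L)$ is an automatic structure if all $L_a^\$$ are regular; $S$ is prefix-automatic if it has an automatic structure $(A,L)$ (for some finite generating set) such that $\{(\alpha,\beta)\delta_A^R:\alpha\in L,\beta\in\mathrm{Pref}(L),\alpha=\beta\}$ is regular, $\mathrm{Pref}(L)$ being the set of prefixes of words of $L$. *)

From HB Require Import structures.
From mathcomp Require Import all_boot all_order all_algebra.
Set Implicit Arguments. Unset Strict Implicit. Unset Printing Implicit Defensive.
Import GRing.Theory.

(* [cong R] is the congruence on A^* generated by R; S = A^+ / cong R. *)
Inductive cong (A : eqType) (R : seq (seq A * seq A)) : seq A -> seq A -> Prop :=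
| cong_step p q l r : (l, r) \in R -> cong R (p ++ l ++ q) (p ++ r ++ q)
| cong_refl w : cong R w w
| cong_sym w1 w2 : cong R w1 w2 -> cong R w2 w1
| cong_trans w1 w2 w3 : cong R w1 w2 -> cong R w2 w3 -> cong R w1 w3.

Record dfa (Sigma : finType) := Dfa {
  dfa_state : finType;
  dfa_start : dfa_state;
  dfa_accept : pred dfa_state;
  dfa_trans : dfa_state -> Sigma -> dfa_state }.

Definition dfa_accepts (Sigma : finType) (M : dfa Sigma) (w : seq Sigma) : bool :=
  @dfa_accept _ M (foldl (@dfa_trans _ M) (@dfa_start _ M) w).

Definition regular (Sigma : finType) (L : seq Sigma -> Prop) : Prop :=
  exists M : dfa Sigma, forall w, L w <-> dfa_accepts M w.

(* Padded alphabet A(2,$) = (A u {$})^2 \ {($,$)}, with $ = None,       *)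
Definition pad_alph (B : finType) : finType :=
  {p : option B * option B | p != (None, None)}.

Definition padconv (B : finType) (alpha beta : seq B) : seq (pad_alph B) :=
  pmap insub
    (zip (map Some alpha ++ nseq (size beta - size alpha) None)
         (map Some beta ++ nseq (size alpha - size beta) None)).

(* A finite generating set of S is a finite type B together with an    *)
(* injective map of B into S (given by representative words gen b);    *)
(* phi : B^+ -> S is then represented by concatenation of the          *)
(* representatives, and alpha = beta in S means cong R.                *)
Section Automatic.
Variables (A : finType) (R : seq (seq A * seq A)).

Definition phiw (B : finType) (gen : B -> seq A) (alpha : seq B) : seq A :=
  flatten (map gen alpha).

Definition is_fin_gen_set (B : finType) (gen : B -> seq A) : Prop :=
  [/\ forall b, gen b != [::],
      forall b1 b2, cong R (gen b1) (gen b2) -> b1 = b2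
    & forall w, w != [::] ->
        exists beta : seq B, beta != [::] /\ cong R (phiw gen beta) w].

(* L_a^$ for a in B u {epsilon} (epsilon = None) *)
Definition Lpad (B : finType) (gen : B -> seq A) (L : seq B -> Prop)
    (a : option B) (w : seq (pad_alph B)) : Prop :=
  exists alpha beta, [/\ L alpha, L beta,
    cong R (phiw gen (alpha ++ oapp (fun c => [:: c]) [::] a)) (phiw gen beta)
    & w = padconv alpha beta].

Definition automatic_structure (B : finType) (gen : B -> seq A)
    (L : seq B -> Prop) : Prop :=
  [/\ forall alpha, L alpha -> alpha != [::],
      regular L,
      forall w, w != [::] -> exists alpha, L alpha /\ cong R (phiw gen alpha) w
    & forall a : option B, regular (Lpad gen L a)].

Definition prefix_closure_lang (B : finType) (gen : B -> seq A)
    (L : seq B -> Prop) (w : seq (pad_alph B)) : Prop :=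
  exists alpha beta, [/\ L alpha, (exists gamma, L (beta ++ gamma)),
    cong R (phiw gen alpha) (phiw gen beta) & w = padconv alpha beta].

Definition prefix_automatic : Prop :=
  exists (B : finType) (gen : B -> seq A) (L : seq B -> Prop),
    [/\ is_fin_gen_set gen, automatic_structure gen L
      & regular (prefix_closure_lang gen L)].

End Automatic.

(* Groebner-Shirshov bases over alphabet 'I_n (letters ordered by      *)
(* their index), deg-lex order on words, coefficients in a field F.     *)
(* Polynomials of F<A> are represented as formal lists of terms        *)
(* (coefficient, word); two polynomials are equal iff all their         *)
(* coefficients [coefw] agree.                                          *)
Fixpoint lexlt (n : nat) (s t : seq 'I_n) : bool :=
  match s, t with
  | [::], _ :: _ => true
  | a :: s', b :: t' => (val a < val b) || ((a == b) && lexlt s' t')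
  | _, _ => false
  end.

Definition deglt (n : nat) (s t : seq 'I_n) : bool :=
  (size s < size t) || ((size s == size t) && lexlt s t).

Section GSB.
Local Open Scope ring_scope.
Variables (F : fieldType) (n : nat).

Definition polyw := seq (F * seq 'I_n).

Definition coefw (p : polyw) (w : seq 'I_n) : F :=
  \sum_(t <- p | t.2 == w) t.1.

Definition relpoly (s : seq 'I_n * seq 'I_n) : polyw := [:: (1, s.1); (-1, s.2)].

Definition mulw (a : seq 'I_n) (p : polyw) (b : seq 'I_n) : polyw :=
  map (fun t => (t.1, a ++ t.2 ++ b)) p.

Definition scalew (c : F) (p : polyw) : polyw := map (fun t => (c * t.1, t.2)) p.

Definition subw (p q : polyw) : polyw := p ++ scalew (-1) q.

Definition trivial_mod (R : seq (seq 'I_n * seq 'I_n)) (h : polyw) (w : seq 'I_n)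
  : Prop :=
  exists T : seq (F * seq 'I_n * (seq 'I_n * seq 'I_n) * seq 'I_n),
    (forall t, t \in T -> t.1.2 \in R /\ deglt (t.1.1.2 ++ t.1.2.1 ++ t.2) w) /\
    forall v, coefw h v =
      coefw (flatten [seq scalew t.1.1.1 (mulw t.1.1.2 (relpoly t.1.2) t.2) | t <- T]) v.

Definition GSbasis (R : seq (seq 'I_n * seq 'I_n)) : Prop :=
  [/\ forall s, s \in R -> deglt s.2 s.1,
      forall f g a b, f \in R -> g \in R -> f.1 ++ b = a ++ g.1 ->
        (size (f.1 ++ b) < size f.1 + size g.1)%N ->
        trivial_mod R (subw (mulw [::] (relpoly f) b) (mulw a (relpoly g) [::]))
                      (f.1 ++ b)
    &
      forall f g a b, f \in R -> g \in R -> f.1 = a ++ g.1 ++ b ->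
        trivial_mod R (subw (relpoly f) (mulw a (relpoly g) b)) f.1].

End GSB.

(* Since {u = x} is a Groebner-Shirshov basis, the rewriting system u -> x is
   confluent: when a word w contains two overlapping occurrences of u, the
   composition of the relation with itself along that overlap is trivial, and
   evaluating this trivial composition at the indicator function of a
   normal-form class (invariant under rewriting below w, by induction along the
   deg-lex order) shows that both one-step rewrites of w have the same normal
   form.  Hence the irreducible words form a cross-section L of S, regular and
   closed under prefixes.  Write u = u'z.  Appending a letter a to an
   irreducible word creates at most one occurrence of u, at its end, and only
   when a = z and the word ends with u'; rewriting it creates a new occurrence
   only when x = z.  So the normal form of (alpha a) is either alpha a, or
   gamma x where alpha = gamma u' (or alpha = gamma u'^m with m >= 1 when
   x = z).  Each padded language L_a^$ is therefore assembled from the diagonal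
   of L, fixed words and the star of a fixed word, hence regular; and by
   prefix-closure the prefix language is the diagonal of L. *)

From mathcomp Require Import all_boot all_order all_algebra zify.
Set Implicit Arguments. Unset Strict Implicit. Unset Printing Implicit Defensive.
Import GRing.Theory.

(** * Regular languages *)

Lemma catl_flatten_nseq (T : eqType) (v w : seq T) :
  (exists m, v ++ w = flatten (nseq m v)) <-> exists m, w = flatten (nseq m v).
Proof.
split=> -[m E]; last by exists m.+1; rewrite E.
case: m E => [|m /eqP]; last by rewrite eqseq_cat // eqxx => /eqP->; exists m.
by case: v w => [|? ?] [|? ?] // _; exists 0.
Qed.

Lemma take_cons_flatten_nseq (T : Type) (x0 : T) (v : seq T) q c w : q < size v ->
  (exists m, take q v ++ c :: w = flatten (nseq m v)) <->
  c = nth x0 v q /\ exists m, take q.+1 v ++ w = flatten (nseq m v).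
Proof.
move=> qv; rewrite (take_nth x0 qv) cat_rcons.
split=> [[[|m] E]|[-> [m E]]]; [by case: (take q v) E | | by exists m].
suff cE : c = nth x0 v q by split; last by exists m.+1; rewrite -cE.
move/(congr1 (nth x0 ^~ q)): E.
by rewrite /= !nth_cat size_takel ?(ltnW qv) // ltnn subnn qv.
Qed.

Section RegularLanguages.
Variable S : finType.
Implicit Types (L : seq S -> Prop) (v w : seq S).

Lemma regular_ext L1 L2 : (forall w, L1 w <-> L2 w) -> regular L1 -> regular L2.
Proof. by move=> L12 [M LM]; exists M => w; apply: iff_trans (iff_sym (L12 w)) (LM w). Qed.

Lemma regularI L1 L2 : regular L1 -> regular L2 -> regular (fun w => L1 w /\ L2 w).
Proof.
move=> [M1 LM1] [M2 LM2].
pose M := Dfa (dfa_start M1, dfa_start M2)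
  (fun q => dfa_accept q.1 && dfa_accept q.2)
  (fun q c => (dfa_trans q.1 c, dfa_trans q.2 c)).
have foldlM w q1 q2 : foldl (@dfa_trans _ M) (q1, q2) w =
    (foldl (@dfa_trans _ M1) q1 w, foldl (@dfa_trans _ M2) q2 w).
  by elim: w q1 q2 => //= c w IHw q1 q2; rewrite IHw.
exists M => w; rewrite LM1 LM2 /dfa_accepts foldlM /=.
by split=> [[-> ->]|/andP].
Qed.

Lemma regularC L : regular L -> regular (fun w => ~ L w).
Proof.
move=> [M LM]; exists (Dfa (dfa_start M) (predC (@dfa_accept _ M)) (@dfa_trans _ M)) => w.
by rewrite LM /dfa_accepts /=; split => /negP.
Qed.

Lemma regularU L1 L2 : regular L1 -> regular L2 -> regular (fun w => L1 w \/ L2 w).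
Proof.
move=> r1 r2; apply: regular_ext (regularC (regularI (regularC r1) (regularC r2))).
case: r1 r2 => [M1 LM1] [M2 LM2] w; rewrite LM1 LM2.
by case: dfa_accepts; case: dfa_accepts; intuition.
Qed.

Lemma regular_pmap (S' : finType) (h : S -> option S') (L : seq S' -> Prop) :
  regular L -> regular (fun w => L (pmap h w)).
Proof.
move=> [M LM].
pose tr (q : dfa_state M) c := if h c is Some c' then dfa_trans q c' else q.
exists (Dfa (dfa_start M) (@dfa_accept _ M) tr) => w.
suff foldlM q : foldl (@dfa_trans _ M) q (pmap h w) = foldl tr q w.
  by rewrite LM /dfa_accepts foldlM.
by elim: w q => //= c w IHw q; rewrite /tr; case: (h c) => /=.
Qed.

Lemma regular_all (P : pred S) : regular (fun w => all P w).
Proof.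
exists (Dfa true id (fun b c => b && P c)) => w; rewrite /dfa_accepts /=.
suff foldlP b : foldl (fun b c => b && P c) b w = b && all P w by rewrite foldlP.
by elim: w b => /= [|c w IHw] b; rewrite ?andbT // IHw andbA.
Qed.

Fixpoint nfa_accepts (Q : finType) (step : Q -> S -> Q -> bool) (final : pred Q)
    (q : Q) w : bool :=
  if w is c :: w' then [exists q', step q c q' && nfa_accepts step final q' w']
  else final q.

Lemma nfa_regular (Q : finType) step final (q0 : Q) L :
  (forall w, L w <-> nfa_accepts step final q0 w) -> regular L.
Proof.
move=> LN.
pose M := Dfa [set q0] (fun A => [exists q in A, final q])
  (fun A c => [set q' | [exists q in A, step q c q']]).
suff foldlM A w : dfa_accept (foldl (@dfa_trans _ M) A w) =
    [exists q in A, nfa_accepts step final q w].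
  exists M => w; rewrite LN /dfa_accepts foldlM.
  split=> [N|/exists_inP[q /set1P-> //]].
  by apply/exists_inP; exists q0; rewrite ?set11.
elim: w A => [|c w IHw] A //; rewrite [LHS]IHw.
apply/exists_inP/exists_inP => [[q'+ Nq']|[q qA /existsP[q' /andP[qq' Nq']]]].
  rewrite inE => /exists_inP[q qA qq'].
  by exists q => //; apply/existsP; exists q'; rewrite qq'.
by exists q' => //; rewrite inE; apply/exists_inP; exists q.
Qed.

Lemma regular_cat L1 L2 : regular L1 -> regular L2 ->
  regular (fun w => exists w1 w2, [/\ w = w1 ++ w2, L1 w1 & L2 w2]).
Proof.
move=> [M1 LM1] [M2 LM2].
pose acc1 q w := dfa_accept (foldl (@dfa_trans _ M1) q w).
pose acc2 q w := dfa_accept (foldl (@dfa_trans _ M2) q w).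
pose s2 := dfa_start M2.
pose step (q : dfa_state M1 + dfa_state M2) c q' :=
  match q, q' with
  | inl q, inl q' => q' == dfa_trans q c
  | inl q, inr q' => dfa_accept q && (q' == dfa_trans s2 c)
  | inr q, inr q' => q' == dfa_trans q c
  | inr _, inl _ => false
  end.
pose final (q : dfa_state M1 + dfa_state M2) :=
  match q with inl q => dfa_accept q && dfa_accept s2 | inr q => dfa_accept q end.
have acc_inr w q : nfa_accepts step final (inr q) w = acc2 q w.
  elim: w q => //= c w IHw q; apply/existsP/idP => [[[//|q'] /andP[/eqP-> ]]|].
    by rewrite IHw.
  by exists (inr (dfa_trans q c)); rewrite /= eqxx IHw.
have acc_inl w q : nfa_accepts step final (inl q) w <->
    exists w1 w2, [/\ w = w1 ++ w2, acc1 q w1 & acc2 s2 w2].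
  elim: w q => [|c w IHw] q /=.
    split=> [/andP[a1 a2]|[w1 [w2 [/esym/nilP]]]]; first by exists [::], [::].
    by rewrite cat_nilp => /andP[/nilP-> /nilP->] a1 a2; apply/andP.
  split=> [/existsP[[q'|q'] /andP[/= + Nq']]|[[|c' w1] [w2 [/= ew a1 a2]]]].
  - move=> /eqP eq'; move/IHw: Nq' => [w1 [w2 [-> a1 a2]]].
    by exists (c :: w1), w2; rewrite /acc1 /= -eq'.
  - move=> /andP[a1 /eqP eq']; exists [::], (c :: w); split=> //.
    by move: Nq'; rewrite acc_inr eq'.
  - apply/existsP; exists (inr (dfa_trans s2 c)); rewrite /= eqxx andbT acc_inr.
    by rewrite -ew in a2; apply/andP.
  - move: a1; case: ew => <- ew a1; apply/existsP; exists (inl (dfa_trans q c)).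
    by rewrite /= eqxx; apply/IHw; exists w1, w2.
apply: (@nfa_regular _ step final (inl (dfa_start M1))) => w; rewrite acc_inl.
split=> -[w1 [w2 [-> a1 a2]]]; exists w1, w2; split=> //; by [apply/LM1 | apply/LM2].
Qed.

Lemma regular_word v : regular (fun w => w = v).
Proof.
pose step (q : 'I_(size v).+1) c (q' : 'I_(size v).+1) :=
  [&& q < size v, c == nth c v q & val q' == q.+1].
pose final (q : 'I_(size v).+1) := val q == size v.
suff accE q w : nfa_accepts step final q w = (w == drop q v).
  by apply: (@nfa_regular _ step final ord0) => w; rewrite accE drop0; split=> /eqP.
elim: w q => [|c w IHw] q /=.
  by rewrite /final [RHS]eq_sym -size_eq0 size_drop subn_eq0 eqn_leq leq_ord.
have [qv|vq] := ltnP q (size v); last first.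
  by rewrite drop_oversize //; apply/existsP => -[q']; rewrite /step ltnNge vq.
rewrite (drop_nth c qv) eqseq_cons.
apply/existsP/andP => [[q' /andP[/and3P[_ -> /eqP q'E]]]|[cE wE]].
  by rewrite IHw q'E.
have qv1 : q.+1 < (size v).+1 by [].
by exists (Ordinal qv1); rewrite IHw wE andbT /step qv cE /=.
Qed.

Lemma regular_word_star v : v != [::] ->
  regular (fun w => exists m, w = flatten (nseq m v)).
Proof.
case: v => [//|c0 v'] _; set v := c0 :: v'.
pose step (q : 'I_(size v)) c (q' : 'I_(size v)) :=
  (c == nth c0 v q) && (val q' == q.+1 %% size v).
pose final (q : 'I_(size v)) := q == 0 :> nat.
suff accE q w : nfa_accepts step final q w <->
    exists m, take q v ++ w = flatten (nseq m v).
  by apply: (@nfa_regular _ step final ord0) => w; rewrite accE take0.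
elim: w q => [|c w IHw] q /=.
  rewrite cats0 /final; split=> [/eqP->|[m]]; first by exists 0; rewrite take0.
  move/(congr1 size); rewrite size_takel ?(ltnW (ltn_ord q)) //.
  rewrite size_flatten /shape map_nseq sumn_nseq.
  move=> qE; apply/eqP; move: (ltn_ord q); rewrite qE.
  by case: m {qE} => [|m]; rewrite ?muln0 //; nia.
have q'_lt : q.+1 %% size v < size v by rewrite ltn_pmod.
rewrite (take_cons_flatten_nseq c0 _ _ (ltn_ord q)).
apply: (@iff_trans _ (c = nth c0 v q /\ nfa_accepts step final (Ordinal q'_lt) w)).
  split=> [/existsP[q' /andP[/andP[/eqP cE /eqP q'E] Nq']]|[cE Nq']].
    by split=> //; congr nfa_accepts: Nq'; apply: val_inj.
  by apply/existsP; exists (Ordinal q'_lt); rewrite /step cE !eqxx.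
rewrite IHw -[nat_of_ord (Ordinal q'_lt)]/(q.+1 %% size v).
have [qv|vq|qv] := ltngtP q.+1 (size v).
- by rewrite modn_small.
- by rewrite ltnNge ltn_ord in vq.
- by rewrite qv modnn take_size take0 catl_flatten_nseq.
Qed.

End RegularLanguages.

(** * Padded pairs of words *)

Section Padding.
Variable B : finType.
Implicit Types (al be g : seq B) (w : seq (option B * option B)).

Fixpoint zip_pad al be : seq (option B * option B) :=
  match al, be with
  | c :: al', d :: be' => (Some c, Some d) :: zip_pad al' be'
  | c :: al', [::] => (Some c, None) :: zip_pad al' [::]
  | [::], _ => map (fun d => (None, Some d)) be
  end.

Lemma zip_pad_nilr al : zip_pad al [::] = map (fun c => (Some c, None)) al.
Proof. by elim: al => //= c al ->. Qed.

Lemma val_padconv al be : map val (padconv al be) = zip_pad al be.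
Proof.
have padded : all (fun p => p != (None, None)) (zip_pad al be).
  elim: al be => [|c al IHal] [|d be] //=; rewrite ?IHal //.
  by elim: be => //= d' be ->.
have zipE : zip (map Some al ++ nseq (size be - size al) None)
    (map Some be ++ nseq (size al - size be) None) = zip_pad al be.
  elim: al be {padded} => [|c al IHal] [|d be] //=; rewrite ?subSS ?IHal ?cats0 //.
    by congr cons; elim: be => //= d' be ->.
  by rewrite zip_pad_nilr; congr cons; elim: al {IHal} => //= c' al ->.
rewrite /padconv zipE (pmap_filter (@insubK _ _ _)).
by apply/all_filterP; apply: sub_all padded => p; rewrite isSome_insub.
Qed.

Lemma padconvP (w : seq (pad_alph B)) al be :
  w = padconv al be <-> map val w = zip_pad al be.
Proof.
split=> [->|wE]; first exact: val_padconv.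
by apply: (inj_map val_inj); rewrite wE val_padconv.
Qed.

Lemma regular_map_val (K : seq (option B * option B) -> Prop) :
  regular K -> regular (fun w : seq (pad_alph B) => K (map val w)).
Proof.
move/(regular_pmap (fun p : pad_alph B => Some (val p))); apply: regular_ext => w.
suff -> : pmap (fun p => Some (val p)) w = map val w by [].
by elim: w => //= p w ->.
Qed.

Lemma zip_pad_fst al be : pmap fst (zip_pad al be) = al.
Proof.
elim: al be => [|c al IHal] [|d be] //=; rewrite ?IHal //.
by elim: be => //= d' be ->.
Qed.

Lemma zip_pad_snd al be : pmap snd (zip_pad al be) = be.
Proof.
elim: al be => [|c al IHal] [|d be] //=; rewrite ?IHal //.
by elim: be => //= d' be [->].
Qed.

Lemma zip_pad_cat a1 a2 b1 b2 : size a1 = size b1 ->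
  zip_pad (a1 ++ a2) (b1 ++ b2) = zip_pad a1 b1 ++ zip_pad a2 b2.
Proof. by elim: a1 b1 => [|c a1 IHa] [|d b1] //= [/IHa ->]. Qed.

Lemma zip_pad_rcons g c : zip_pad g (rcons g c) = zip_pad g g ++ [:: (None, Some c)].
Proof. by rewrite -cats1 -{1}(cats0 g) zip_pad_cat. Qed.

Definition diag_letter (p : option B * option B) := (p.1 == p.2) && (p.1 != None).

Lemma all_diag_zip_pad g : all diag_letter (zip_pad g g).
Proof. by elim: g => //= c g ->; rewrite /diag_letter /= eqxx. Qed.

Lemma all_diagP w : all diag_letter w -> w = zip_pad (pmap fst w) (pmap fst w).
Proof.
elim: w => //= -[[c|] [d|]] w IHw //=.
by rewrite /diag_letter /= => /andP[/andP[/eqP[<-] _] /IHw {1}->].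
Qed.

End Padding.

Arguments diag_letter {B} p.

(** * Rewriting with a single rule *)

Lemma cat_eq_leq (T : Type) (p0 s0 p1 s1 : seq T) :
  p0 ++ s0 = p1 ++ s1 -> size p0 <= size p1 ->
  exists m, p1 = p0 ++ m /\ s0 = m ++ s1.
Proof.
elim: p0 p1 => [|c p0 IHp] [|d p1] //=; first by move=> -> _; exists [::].
  by move=> -> _; exists (d :: p1).
by move=> [-> /IHp IH] /IH[m [-> ->]]; exists m.
Qed.

Lemma two_occurrences (T : eqType) (u p0 q0 p1 q1 : seq T) :
  p0 ++ u ++ q0 = p1 ++ u ++ q1 -> size p0 <= size p1 ->
  [\/ p0 = p1 /\ q0 = q1,
      exists m, p1 = p0 ++ u ++ m /\ q0 = m ++ u ++ q1
    | exists m b, [/\ p1 = p0 ++ m, q0 = b ++ q1, u ++ b = m ++ u,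
                    size b = size m & 0 < size m < size u]].
Proof.
move=> E /(cat_eq_leq E)[m [p1E uE]].
have [m0|m_gt0] := posnP (size m).
  move/eqP: m0 uE p1E; rewrite size_eq0 => /eqP-> /= /eqP; rewrite eqseq_cat // eqxx.
  by move=> /eqP-> ->; rewrite cats0; constructor 1.
have [um|mu] := leqP (size u) (size m).
  have [m' [mE q0E]] := cat_eq_leq uE um.
  by constructor 2; exists m'; rewrite p1E mE q0E.
have [r [umr rE]] := cat_eq_leq (esym uE) (ltnW mu).
have r_le_u : size r <= size u by rewrite umr size_cat leq_addl.
have [b [urb q0E]] := cat_eq_leq (esym rE) r_le_u.
constructor 3; exists m, b; split=> //; last by rewrite m_gt0.
- by rewrite {1}umr -catA -urb.
- by move: (congr1 size umr) (congr1 size urb); rewrite !size_cat; lia.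
Qed.

Section Rewriting.
Variables (T : eqType) (u r : seq T).
Hypothesis size_ru : size r < size u.
Implicit Types (p q v w : seq T).

Definition rewrites v v' := exists p q, v = p ++ u ++ q /\ v' = p ++ r ++ q.

(* Junk value [w ++ r] when [u] does not occur in [w]. *)
Definition leftmost_rewrite w :=
  let i := infix_index u w in take i w ++ r ++ drop (size u + i) w.

Lemma infix_index_cat p q : infix_index u (p ++ u ++ q) <= size p.
Proof.
elim: p => [|c p IHp] /=; first by rewrite prefix_index // prefix_prefix.
by case: ifP.
Qed.

Lemma leftmost_rewriteP w : infix u w ->
  exists p q, [/\ w = p ++ u ++ q, leftmost_rewrite w = p ++ r ++ q
                & forall p1 q1, w = p1 ++ u ++ q1 -> size p <= size p1].
Proof.
move=> uw.
exists (take (infix_index u w) w), (drop (size u + infix_index u w) w); split=> //.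
- move: uw; rewrite infixE => /eqP uE.
  rewrite -{1}(cat_take_drop (infix_index u w) w).
  by rewrite -{1}(cat_take_drop (size u) (drop _ w)) uE drop_drop.
- move=> p1 q1 wE; rewrite size_takel ?infixTindex //.
  by rewrite wE infix_index_cat.
Qed.

Lemma rewrites_leftmost w : infix u w -> rewrites w (leftmost_rewrite w).
Proof. by case/leftmost_rewriteP=> p [q [-> -> _]]; exists p, q. Qed.

Lemma size_rewrites v v' : rewrites v v' -> size v' < size v.
Proof. by case=> p [q [-> ->]]; rewrite !size_cat ltn_add2l ltn_add2r. Qed.

Fixpoint nf_iter m w :=
  if m is m'.+1 then (if infix u w then nf_iter m' (leftmost_rewrite w) else w) else w.

Definition nf w := nf_iter (size w) w.

Lemma nf_iterE m1 m2 w :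
  size w <= m1 -> size w <= m2 -> nf_iter m1 w = nf_iter m2 w.
Proof.
elim: m1 m2 w => [|m1 IHm] m2 w le1 le2; have [uw|nuw] := boolP (infix u w);
  try by case: m2 {le2} => [|m2] /=; rewrite ?(negbTE nuw).
  by have := size_infix uw; lia.
case: m2 le2 => [|m2] le2 /=; first by have := size_infix uw; lia.
have lt_w := size_rewrites (rewrites_leftmost uw).
by rewrite uw; apply: IHm; rewrite -ltnS (leq_trans lt_w).
Qed.

Lemma nf_id w : ~~ infix u w -> nf w = w.
Proof. by rewrite /nf; case: (size w) => //= m /negbTE->. Qed.

Lemma nf_leftmost w : infix u w -> nf w = nf (leftmost_rewrite w).
Proof.
move=> uw; have lt_w := size_rewrites (rewrites_leftmost uw).
rewrite /nf; case: (size w) lt_w => // m lt_w /=; rewrite uw.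
by apply: nf_iterE.
Qed.

Lemma nf_ind (P : seq T -> seq T -> Prop) :
  (forall w, ~~ infix u w -> P w w) ->
  (forall w v, infix u w -> P (leftmost_rewrite w) v -> P w v) ->
  forall w, P w (nf w).
Proof.
move=> Pirr Pstep w; elim: {w}(size w).+1 {-2}w (ltnSn (size w)) => // N IHN w.
rewrite ltnS => le_w; have [uw|nuw] := boolP (infix u w); last first.
  by rewrite nf_id //; apply: Pirr.
rewrite nf_leftmost //; apply: Pstep (IHN _ _) => //.
exact: leq_trans (size_rewrites (rewrites_leftmost uw)) le_w.
Qed.

Lemma nf_irreducible w : ~~ infix u (nf w).
Proof. exact: (@nf_ind (fun _ v => ~~ infix u v)). Qed.

End Rewriting.

(** * Confluence from the Groebner-Shirshov property *)

Section DegLex.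
Variable n : nat.
Implicit Types s t p q w : seq 'I_n.

Fixpoint lex_rank s : nat := if s is c :: s' then c * n ^ size s' + lex_rank s' else 0.

Lemma lex_rank_lt s : lex_rank s < n ^ size s.
Proof.
elim: s => [|c s IHs] /=; first by rewrite expn0.
apply: (@leq_trans (c.+1 * n ^ size s)); first by rewrite mulSn addnC ltn_add2r.
by rewrite expnS leq_mul2r ltn_ord orbT.
Qed.

Lemma lexlt_rank s t : size s = size t -> lexlt s t -> lex_rank s < lex_rank t.
Proof.
elim: s t => [|c s IHs] [|d t] //= [st] /orP[cd|/andP[/eqP-> /(IHs _ st)]].
  apply: (@leq_trans (c.+1 * n ^ size s)).
    by rewrite mulSn addnC ltn_add2r lex_rank_lt.
  by rewrite st (leq_trans _ (leq_addr _ _)) // leq_mul2r cd orbT.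
by rewrite st ltn_add2l.
Qed.

Lemma deglt_ind (P : seq 'I_n -> Prop) :
  (forall w, (forall v, deglt v w -> P v) -> P w) -> forall w, P w.
Proof.
move=> IH w; suff: forall N M w, size w < N -> lex_rank w < M -> P w by apply.
elim=> // N IHN; elim=> // M IHM {}w ltN ltM.
apply: IH => v /orP[lt_size|/andP[/eqP eq_size lt_lex]].
  exact: (IHN (lex_rank v).+1 v (leq_trans lt_size ltN)).
by apply: IHM; [rewrite eq_size | exact: leq_trans (lexlt_rank eq_size lt_lex) ltM].
Qed.

Lemma deglt_cat p s t q : deglt s t -> deglt (p ++ s ++ q) (p ++ t ++ q).
Proof.
have lexlt_catl p' s' t' : lexlt (p' ++ s') (p' ++ t') = lexlt s' t'.
  by elim: p' => //= c p' ->; rewrite ltnn eqxx.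
have lexlt_catr s' t' q' :
    size s' = size t' -> lexlt s' t' -> lexlt (s' ++ q') (t' ++ q').
  elim: s' t' => [|c s' IHs] [|d t'] //= [st] /orP[->//|/andP[-> /(IHs _ st)->]].
  by rewrite orbT.
rewrite /deglt !size_cat => /orP[lt_st|/andP[/eqP st lt_st]].
  by rewrite ltn_add2l ltn_add2r lt_st.
by rewrite st eqxx ltnn lexlt_catl lexlt_catr.
Qed.

End DegLex.

Section Evaluation.
Local Open Scope ring_scope.
Variables (F : fieldType) (n : nat) (phi : seq 'I_n -> F).
Implicit Types p : polyw F n.

Definition evalw p : F := \sum_(t <- p) t.1 * phi t.2.

Lemma evalw_coefw p (S : seq (seq 'I_n)) : uniq S -> {subset map snd p <= S} ->
  evalw p = \sum_(v <- S) coefw p v * phi v.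
Proof.
move=> uS pS; under eq_bigr => v _ do rewrite /coefw big_distrl big_mkcond /=.
rewrite exchange_big /evalw big_seq [RHS]big_seq; apply: eq_bigr => t tp.
rewrite -big_mkcond /= (eq_bigl (pred1 t.2)) => [|v]; last by rewrite eq_sym.
by rewrite -big_filter filter_pred1_uniq ?pS ?map_f // big_seq1.
Qed.

Lemma eq_evalw p p' : coefw p =1 coefw p' -> evalw p = evalw p'.
Proof.
move=> pp'; pose S := undup (map snd (p ++ p')).
have [uS pS p'S] : [/\ uniq S, {subset map snd p <= S} & {subset map snd p' <= S}].
  by split=> [|v|v]; rewrite ?undup_uniq // mem_undup map_cat mem_cat => ->; rewrite ?orbT.
by rewrite (evalw_coefw uS pS) (evalw_coefw uS p'S); apply: eq_bigr => v _; rewrite pp'.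
Qed.

Lemma evalw_flatten (ps : seq (polyw F n)) :
  evalw (flatten ps) = \sum_(p <- ps) evalw p.
Proof. exact: big_flatten. Qed.

Lemma evalw_cat p p' : evalw (p ++ p') = evalw p + evalw p'.
Proof. exact: big_cat. Qed.

Lemma evalw_scalew c p : evalw (scalew c p) = c * evalw p.
Proof. by rewrite /evalw big_map mulr_sumr; apply: eq_bigr => t _; rewrite mulrA. Qed.

Lemma evalw_mulw_relpoly a s b :
  evalw (mulw a (relpoly F s) b) = phi (a ++ s.1 ++ b) - phi (a ++ s.2 ++ b).
Proof. by rewrite /evalw !big_cons big_nil /= addr0 mul1r mulN1r. Qed.

Lemma evalw_trivial_mod R h w :
    (forall s a b, s \in R -> deglt (a ++ s.1 ++ b) w ->
       phi (a ++ s.1 ++ b) = phi (a ++ s.2 ++ b)) ->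
  trivial_mod R h w -> evalw h = 0.
Proof.
move=> phiR [T [TR hT]]; rewrite (eq_evalw hT) evalw_flatten big_map big_seq.
rewrite big1 // => t /TR[sR lt_w].
by rewrite evalw_scalew evalw_mulw_relpoly phiR // subrr mulr0.
Qed.

End Evaluation.

Section Confluence.
Variables (F : fieldType) (n : nat) (u r : seq 'I_n).
Hypotheses (size_ru : size r < size u) (GS : GSbasis F [:: (u, r)]).

Local Notation nf := (nf u r).
Local Notation rewrites := (rewrites u r).

Lemma nf_overlap p q m b :
    u ++ b = m ++ u -> size b < size u ->
    (forall v v', deglt v (p ++ (u ++ b) ++ q) -> rewrites v v' -> nf v' = nf v) ->
  nf (p ++ m ++ r ++ q) = nf (p ++ r ++ b ++ q).
Proof.
move=> ubmu lt_bu IH.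
(* By [IH], [phi] is invariant under the rule below [u ++ b], hence vanishes on
   the trivial composition [(u - r) b - m (u - r)]; evaluated directly, that
   composition gives [phi (m ++ r) - phi (r ++ b)]. *)
pose phi v : F := (nf (p ++ v ++ q) == nf (p ++ r ++ b ++ q))%:R%R.
have uR : (u, r) \in [:: (u, r)] by rewrite mem_seq1.
have phiR s a' b' : s \in [:: (u, r)] -> deglt (a' ++ s.1 ++ b') (u ++ b) ->
    phi (a' ++ s.1 ++ b') = phi (a' ++ s.2 ++ b').
  rewrite mem_seq1 => /eqP-> /= lt_ub.
  rewrite /phi (IH (p ++ (a' ++ u ++ b') ++ q) (p ++ (a' ++ r ++ b') ++ q)) //.
    exact: deglt_cat.
  by exists (p ++ a'), (b' ++ q); rewrite !catA.
case: GS => _ GS_overlap _.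
have ub_lt : size (u ++ b) < size u + size u by rewrite size_cat ltn_add2l.
have := GS_overlap _ _ m b uR uR ubmu ub_lt.
move/(evalw_trivial_mod phiR); rewrite evalw_cat evalw_scalew !evalw_mulw_relpoly /=.
rewrite ubmu !cats0 addrC mulN1r opprB addrA subrK => /eqP.
rewrite subr_eq0 /phi -!catA eqxx.
have [//|_] := eqVneq (nf (p ++ m ++ r ++ q)) (nf (p ++ r ++ b ++ q)).
by rewrite eq_sym oner_eq0.
Qed.

Theorem nf_rewrites v v' : rewrites v v' -> nf v' = nf v.
Proof.
elim/deglt_ind: v v' => w IH w1 [p1 [q1 [wE ->]]].
have uw : infix u w by rewrite wE infix_infix.
have [p0 [q0 [w0E lmE p0_min]]] := leftmost_rewriteP r uw.
rewrite (nf_leftmost size_ru uw) lmE.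
have IHsize v v' : size v < size w -> rewrites v v' -> nf v' = nf v.
  by move=> lt_vw; apply: IH; rewrite /deglt lt_vw.
have lt_w0 : size (p0 ++ r ++ q0) < size w.
  by rewrite -lmE; apply/(size_rewrites size_ru)/rewrites_leftmost.
have lt_w1 : size (p1 ++ r ++ q1) < size w.
  by apply: (size_rewrites size_ru); exists p1, q1.
have [[<- <-] //|[m [p1E q0E]]|[m [b [p1E q0E ubmu bm /andP[_ lt_mu]]]]] :=
  two_occurrences (etrans (esym w0E) wE) (p0_min _ _ wE); subst p1 q0.
- have w2_w0 : nf (p0 ++ r ++ m ++ r ++ q1) = nf (p0 ++ r ++ m ++ u ++ q1).
    by apply: IHsize lt_w0 _; exists (p0 ++ r ++ m), q1; rewrite -!catA.
  have w2_w1 : nf (p0 ++ r ++ m ++ r ++ q1) = nf ((p0 ++ u ++ m) ++ r ++ q1).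
    by apply: IHsize lt_w1 _; exists p0, (m ++ r ++ q1); rewrite -!catA.
  by rewrite -w2_w1 w2_w0.
- rewrite -catA; apply: nf_overlap => //; first by rewrite bm.
  by move=> v v' lt_v; apply: IH; rewrite w0E; move: lt_v; rewrite -catA.
Qed.

End Confluence.

(** * Normal form of a word followed by a letter *)

Lemma flatten_nseqS (T : Type) (v : seq T) m :
  flatten (nseq m.+1 v) = flatten (nseq m v) ++ v.
Proof. by rewrite -addn1 nseqD flatten_cat /= cats0. Qed.

Section AppendLetter.
Variables (T : eqType) (u' : seq T) (z x : T).
Hypothesis u'_nil : u' != [::].
Local Notation u := (rcons u' z).
Local Notation nf := (nf u [:: x]).
Hypothesis confluent : forall v v', rewrites u [:: x] v v' -> nf v' = nf v.
Implicit Types (a : T) (al be g s : seq T).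

Lemma size_rule : size [:: x] < size u.
Proof. by rewrite size_rcons ltnS lt0n size_eq0. Qed.

(* The words [s] such that [s ++ [:: z]] reduces to [[:: x]]: [u'], and also
   every positive power of [u'] when [x = z]. *)
Definition collapsible s := exists2 m, s = flatten (nseq m.+1 u') & (x == z) || (m == 0).

Definition nf_rcons_spec a al be :=
  be = rcons al a \/ a = z /\ exists g s, [/\ al = g ++ s, be = rcons g x & collapsible s].

Lemma infix_rcons al a : ~~ infix u al -> infix u (rcons al a) ->
  a = z /\ exists g, al = g ++ u'.
Proof.
move=> nual; rewrite infix_rconsl (negbTE nual) orbF suffix_rcons.
by case/andP=> /eqP<- /suffixP.
Qed.

Lemma nf_rcons_suffix g : nf (rcons (g ++ u') z) = nf (rcons g x).
Proof. by apply/esym/confluent; exists g, [::]; rewrite !cats0 rcons_cat cats1. Qed.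

Lemma nf_collapsible g s : collapsible s -> nf (rcons (g ++ s) z) = nf (rcons g x).
Proof.
move=> [m ->]; elim: m => [_|m IHm /orP[/eqP xz|//]].
  by rewrite /= cats0 nf_rcons_suffix.
by rewrite flatten_nseqS catA nf_rcons_suffix -IHm xz ?eqxx.
Qed.

Lemma nf_rconsP a al be : ~~ infix u al -> ~~ infix u be ->
  nf (rcons al a) = be <-> nf_rcons_spec a al be.
Proof.
move=> nual nube; split; last first.
  by case=> [beE|[-> [g [s [-> beE /nf_collapsible->]]]]]; rewrite -beE nf_id.
elim: {al}(size al).+1 {-2}al (ltnSn (size al)) a nual => // N IHN al al_lt a nual.
have [ual|] := boolP (infix u (rcons al a)); last by move/nf_id->; left.
have [-> [g alE]] := infix_rcons nual ual; subst al.
have nug : ~~ infix u g by apply: contra nual => /infix_catr.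
have lt_g : size g < N.
  by move: al_lt u'_nil; rewrite size_cat ltnS -size_eq0; lia.
rewrite nf_rcons_suffix => /(IHN g lt_g x nug) [->|[xz [g' [s [gE -> [m sE _]]]]]].
  by right; split=> //; exists g, u'; split=> //; exists 0; rewrite /= ?cats0 ?orbT.
right; split=> //; exists g', (s ++ u'); split=> //; first by rewrite gE catA.
by exists m.+1; [rewrite sE [RHS]flatten_nseqS | rewrite xz eqxx].
Qed.

End AppendLetter.

Section PrefixAutomatic.
Variables (F : fieldType) (n : nat) (u' : seq 'I_n) (z x : 'I_n).
Hypothesis u'_nil : u' != [::].
Local Notation u := (rcons u' z).
Local Notation R := [:: (u, [:: x])].
Hypothesis GS : GSbasis F R.
Local Notation nf := (nf u [:: x]).
Implicit Types (a : 'I_n) (v al be : seq 'I_n).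

Let size_ru : size [:: x] < size u := size_rule z x u'_nil.
Let confluent : forall v v', rewrites u [:: x] v v' -> nf v' = nf v :=
  nf_rewrites size_ru GS.

Lemma cong_nf v : cong R v (nf v).
Proof.
apply: (nf_ind size_ru (P := cong R)) => [w _|w w' uw]; first exact: cong_refl.
apply: cong_trans; have [p [q [wE ->]]] := rewrites_leftmost [:: x] uw.
by rewrite {1}wE; apply: cong_step; rewrite mem_seq1.
Qed.

Lemma nf_cong v v' : cong R v v' -> nf v = nf v'.
Proof.
elim=> [p q l r'|//|_ _ _ ->|_ _ _ _ -> _ ->] //.
by rewrite mem_seq1 => /eqP[-> ->]; symmetry; apply: confluent; exists p, q.
Qed.

Lemma nf_neq_nil v : v != [::] -> nf v != [::].
Proof.
apply: (nf_ind size_ru (P := fun v v' => v != [::] -> v' != [::])) => // w w' uw IH _.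
by apply: IH; have [p [q [_ ->]]] := rewrites_leftmost [:: x] uw; case: p.
Qed.

Lemma irreducible_cong v v' : ~~ infix u v -> ~~ infix u v' -> cong R v v' -> v = v'.
Proof. by move=> nuv nuv' /nf_cong; rewrite !nf_id. Qed.

Definition normal_forms (w : seq 'I_n) := w != [::] /\ ~~ infix u w.

Lemma regular_normal_forms : regular normal_forms.
Proof.
have reg_infix : regular (fun w => infix u w).
  apply: regular_ext (regular_cat (regular_all predT)
    (regular_cat (regular_word u) (regular_all predT))) => w.
  split=> [[p [_ [-> _ [_ [q [-> -> _]]]]]]|/infixP[p [q ->]]]; first exact: infix_infix.
  by exists p, (u ++ q); split; rewrite ?all_predT //; exists u, q; rewrite all_predT.
apply: regular_ext (regularI (regularC (regular_word [::])) (regularC reg_infix)) => w.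
by rewrite /normal_forms; split=> -[/eqP ? /negP ?].
Qed.

Definition gen (c : 'I_n) := [:: c].

Lemma phiw_gen (w : seq 'I_n) : phiw gen w = w.
Proof. exact: flatten_seq1. Qed.

Lemma fin_gen_set : is_fin_gen_set R gen.
Proof.
have nu1 c : ~~ infix u [:: c].
  by apply/negP => /size_infix; rewrite size_rcons ltnS leqn0 size_eq0 (negbTE u'_nil).
split=> // [c1 c2 /irreducible_cong|w w_nil]; first by case/(_ (nu1 c1) (nu1 c2)).
by exists w; rewrite phiw_gen; split=> //; exact: cong_refl.
Qed.

Definition diag_lang (w : seq (pad_alph 'I_n)) :=
  exists al, normal_forms al /\ w = padconv al al.

Lemma regular_diag_lang : regular diag_lang.
Proof.
apply: regular_ext (regular_map_val (regularI (regular_all diag_letter)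
                      (regular_pmap fst regular_normal_forms))) => w.
split=> [[/all_diagP wE Lw]|[al [Lal /padconvP->]]].
  by exists (pmap fst (map val w)); split=> //; apply/padconvP.
by rewrite zip_pad_fst all_diag_zip_pad.
Qed.

Lemma Lpad_None (w : seq (pad_alph 'I_n)) :
  Lpad R gen normal_forms None w <-> diag_lang w.
Proof.
split=> [[al [be [Lal Lbe]]]|[al [Lal ->]]]; last first.
  by exists al, al; split=> //; rewrite /= cats0; exact: cong_refl.
rewrite /= cats0 !phiw_gen => /(irreducible_cong Lal.2 Lbe.2) <- ->.
by exists al.
Qed.

Lemma prefix_closure_diag (w : seq (pad_alph 'I_n)) :
  prefix_closure_lang R gen normal_forms w <-> diag_lang w.
Proof.
split=> [[al [be [Lal [g Lbeg] C ->]]]|[al [Lal ->]]]; last first.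
  by exists al, al; split=> //; [exists [::]; rewrite cats0 | exact: cong_refl].
have nube : ~~ infix u be by apply: contra Lbeg.2 => /infix_catr.
by rewrite !phiw_gen in C; rewrite -(irreducible_cong Lal.2 nube C); exists al.
Qed.

Definition left_letter (c : 'I_n) : option 'I_n * option 'I_n := (Some c, None).

Definition tail_lang (ws : seq (option 'I_n * option 'I_n)) :=
  exists2 m, ws = flatten (nseq m (map left_letter u')) & (x == z) || (m == 0).

Lemma regular_tail_lang : regular tail_lang.
Proof.
have [xz|xz] := eqVneq x z.
  have lu'_nil : map left_letter u' != [::] by rewrite -size_eq0 size_map size_eq0.
  apply: regular_ext (regular_word_star lu'_nil) => ws.
  by rewrite /tail_lang xz eqxx; split=> -[m]; exists m.
apply: regular_ext (regular_word [::]) => ws; rewrite /tail_lang (negbTE xz).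
by split=> [->|[[|m] // ->]]; first exists 0.
Qed.

Definition collapse_lang (ws : seq (option 'I_n * option 'I_n)) :=
  exists2 s, collapsible u' z x s & ws = zip_pad s [:: x].

Lemma zip_pad_cat_collapse t :
  zip_pad (u' ++ t) [:: x] = zip_pad u' [:: x] ++ map left_letter t.
Proof. by case: u' u'_nil => //= c v _; rewrite !zip_pad_nilr map_cat. Qed.

Lemma collapse_langE ws : collapse_lang ws <->
  exists w1 w2, [/\ ws = w1 ++ w2, w1 = zip_pad u' [:: x] & tail_lang w2].
Proof.
split=> [[s [m -> mxz] ->]|[w1 [w2 [-> -> [m -> mxz]]]]].
  exists (zip_pad u' [:: x]), (map left_letter (flatten (nseq m u'))).
  by rewrite /= zip_pad_cat_collapse; split=> //; exists m; rewrite ?map_flatten ?map_nseq.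
exists (flatten (nseq m.+1 u')); first by exists m.
by rewrite /= zip_pad_cat_collapse map_flatten map_nseq.
Qed.

Definition append_lang a (ws : seq (option 'I_n * option 'I_n)) :=
  exists al be, ws = zip_pad al be /\ nf_rcons_spec u' z x a al be.

Lemma append_langE a ws : append_lang a ws <->
  (exists w1 w2, [/\ ws = w1 ++ w2, all diag_letter w1 & w2 = [:: (None, Some a)]]) \/
  a = z /\ exists w1 w2, [/\ ws = w1 ++ w2, all diag_letter w1 & collapse_lang w2].
Proof.
split=> [[al [be [-> [->|[-> [g [s [-> -> cs]]]]]]]]|].
- left; exists (zip_pad al al), [:: (None, Some a)]; split; rewrite ?all_diag_zip_pad //.
  by rewrite zip_pad_rcons.
- right; split=> //; exists (zip_pad g g), (zip_pad s [:: x]).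
  by rewrite -cats1 zip_pad_cat // all_diag_zip_pad; split=> //; exists s.
case=> [[w1 [w2 [-> /all_diagP-> ->]]]|[-> [w1 [w2 [-> /all_diagP-> [s cs ->]]]]]].
  exists (pmap fst w1), (rcons (pmap fst w1) a); split; last by left.
  by rewrite zip_pad_rcons.
exists (pmap fst w1 ++ s), (rcons (pmap fst w1) x).
split; first by rewrite -cats1 zip_pad_cat.
by right; split=> //; exists (pmap fst w1), s.
Qed.

Lemma regular_append_lang a : regular (append_lang a).
Proof.
have reg_diag_a :=
  regular_cat (regular_all diag_letter) (regular_word [:: (None, Some a)]).
have reg_collapse : regular collapse_lang.
  apply: regular_ext (regular_cat (regular_word _) regular_tail_lang) => ws.
  exact: iff_sym (collapse_langE ws).
have reg_diag_collapse := regular_cat (regular_all diag_letter) reg_collapse.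
have [az|az] := eqVneq a z.
  apply: regular_ext (regularU reg_diag_a reg_diag_collapse) => ws; rewrite append_langE.
  by split=> [[h|h]|[h|[_ h]]]; [left | right; split | left | right].
apply: regular_ext reg_diag_a => ws; rewrite append_langE.
by split=> [|[//|[/eqP]]]; [left | rewrite (negbTE az)].
Qed.

Lemma Lpad_Some a (w : seq (pad_alph 'I_n)) :
  Lpad R gen normal_forms (Some a) w <->
  [/\ normal_forms (pmap fst (map val w)), normal_forms (pmap snd (map val w))
    & append_lang a (map val w)].
Proof.
split=> [[al [be [Lal Lbe]]]|[Lal Lbe [al [be [wE spec]]]]].
  rewrite /= !phiw_gen cats1 => /nf_cong; rewrite (nf_id _ Lbe.2) => nfE /padconvP->.
  rewrite zip_pad_fst zip_pad_snd; split=> //; exists al, be; split=> //.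
  exact/(nf_rconsP u'_nil confluent a Lal.2 Lbe.2).
rewrite wE zip_pad_fst zip_pad_snd in Lal Lbe.
exists al, be; split=> //; last exact/padconvP.
rewrite /= !phiw_gen cats1 -(proj2 (nf_rconsP u'_nil confluent a Lal.2 Lbe.2) spec).
exact: cong_nf.
Qed.

Theorem rcons_relation_prefix_automatic : prefix_automatic R.
Proof.
exists 'I_n, gen, normal_forms; split.
- exact: fin_gen_set.
- split=> [al [] //||w w_nil|[a|]].
  + exact: regular_normal_forms.
  + exists (nf w); split; last by rewrite phiw_gen; apply/cong_sym/cong_nf.
    by split; [exact: nf_neq_nil | exact: nf_irreducible].
  + apply: regular_ext (regularI (regular_map_val (regular_pmap fst regular_normal_forms))
      (regularI (regular_map_val (regular_pmap snd regular_normal_forms))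
        (regular_map_val (regular_append_lang a)))) => w.
    by rewrite Lpad_Some; split=> [[? [? ?]]|[]].
  + by apply: regular_ext regular_diag_lang => w; rewrite Lpad_None.
- by apply: regular_ext regular_diag_lang => w; rewrite prefix_closure_diag.
Qed.

End PrefixAutomatic.

Theorem theorem3p1p5 (F : fieldType) (n k : nat) (u : seq 'I_n) (x : 'I_n) :
  (2 <= k)%N -> size u = k ->
  GSbasis F [:: (u, [:: x])] ->
  prefix_automatic [:: (u, [:: x])].
Proof.
move=> k_ge2 uk; subst k; case/lastP: u k_ge2 => [//|u' z].
rewrite size_rcons ltnS lt0n size_eq0.
exact: rcons_relation_prefix_automatic.
Qed.
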